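(* Let $G$ be a digraph and $f$ a discrete Morse function on $G$ such that every vertex $v$ with $f(v)=0$ has out-degree $1$ and in-degree $1$, and let $(\tilde G,\tilde f)$ be the $\mathcal M$-collapse of $(G,f)$. Then every pair $(\alpha,\beta)\in\mathcal M(\tilde G,\tilde f)$ has one of the forms $$\alpha=\cdots u,\ \ \beta=\cdots u\,v\qquad\text{or}\qquad \alpha=w\cdots,\ \ \beta=v\,w\cdots$$ (i.e. either $\alpha$ ends at $u$ and $\beta=\alpha v$, or $\alpha$ starts at $w$ and $\beta=v\alpha$), where $v$ is a vertex with $f(v)=0$, $u\to v\to w$ in $G$, and $u\to w$ is not a directed edge in $G$.
   Context: A digraph $G=(V,E)$ consists of a set $V$ and $E\subseteq(V\times V)\setminus\{(v,v)\}$; $(u,v)\in E$ is written $u\to v$. The out-degree (in-degree) of $v$ is the number of edges starting (ending) at $v$. An allowed elementary $n$-path is a sequence $v_0\cdots v_n$ of vertices with $v_{i-1}\to v_i\in E$ for $1\le i\le n$. For allowed elementary paths, $\gamma'<\gamma$ means $\gamma'$ is obtained from $\gamma$ by deleting some entries. A map $f:V\to[0,+\infty)$ is a discrete Morse function on $G$ if for every allowed elementary path $v_0\cdots v_n$: (i) there is at most one index $i$ with $f(v_i)=0$ such that $v_0\cdots v_{i-1}v_{i+1}\cdots v_n$ is an allowed elementary $(n-1)$-path; (ii) there is at most one vertex $u$ with $f(u)=0$ such that for some $-1\le j\le n$ the sequence $v_0\cdots v_juv_{j+1}\cdots v_n$ (meaning $uv_0\cdots v_n$ if $j=-1$, $v_0\cdots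 v_nu$ if $j=n$) is an allowed elementary $(n+1)$-path. Set $f(v_0\cdots v_n)=\sum_if(v_i)$. $\mathcal M(G,f)$ is the set of pairs $(\alpha,\beta)$ with $\alpha$ an allowed elementary $n$-path, $\beta$ an allowed elementary $(n+1)$-path for some $n\ge0$, $\alpha<\beta$ and $f(\alpha)=f(\beta)$. $\mathcal M$-collapse: under the degree hypothesis each zero $v$ of $f$ has a unique in-neighbour $u$ and out-neighbour $w$; let $Z$ be the set of zeros $v$ of $f$ for which $u\to w$ is an edge of $G$. Then $\tilde G$ has vertex set $V\setminus Z$ and edge set $E\setminus\{u\to v,\ v\to w: v\in Z\}$ (the result of successively substituting each such $u\to v\to w$ by $u\to w$), and $\tilde f=f|_{V\setminus Z}$. *)

From mathcomp Require Import all_boot all_order all_algebra.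
Set Implicit Arguments. Unset Strict Implicit. Unset Printing Implicit Defensive.
Import Order.TTheory GRing.Theory Num.Theory.
Local Open Scope ring_scope.

(* A digraph is given by a vertex set S : {set V} inside a finite type V and an
   edge relation E : rel V (only edges between vertices of S matter). *)
Section Digraph.
Variables (V : finType) (S : {set V}) (E : rel V).

Definition allowed (p : seq V) : bool :=
  match p with
  | [::] => false
  | x :: q => all (fun v => v \in S) p && path E x q
  end.

Definition del_at (p : seq V) (i : nat) : seq V := take i p ++ drop i.+1 p.
Definition ins_at (p : seq V) (j : nat) (u : V) : seq V := take j p ++ u :: drop j p.

Variable (R : realFieldType) (f : V -> R).

Definition morse_cond_i (p : seq V) : bool :=
  match p with
  | [::] => true
  | x0 :: _ =>
      (count (fun i => (f (nth x0 p i) == 0%R) && allowed (del_at p i))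
            (iota 0 (size p)) <= 1)%N
  end.

Definition morse_cond_ii (p : seq V) : bool :=
  (#|[set u in S | (f u == 0%R) &&
        [exists j : 'I_(size p).+1, allowed (ins_at p j u)]]| <= 1)%N.

Definition discrete_morse : Prop :=
  (forall v, v \in S -> 0 <= f v) /\
  (forall p, allowed p -> morse_cond_i p /\ morse_cond_ii p).

Definition fweight (p : seq V) : R := \sum_(x <- p) f x.

Definition inM (alpha beta : seq V) : bool :=
  [&& allowed alpha, allowed beta, size beta == (size alpha).+1,
      subseq alpha beta & fweight alpha == fweight beta].

End Digraph.

Section Collapse.
Variables (V : finType) (E : rel V) (R : realFieldType) (f : V -> R).

(* Z : zeros v of f whose (unique) in-neighbour u and out-neighbour w satisfy u -> w *)
Definition collapseZ : {set V} :=
  [set v | (f v == 0%R) &&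
     [exists u, exists w, [&& E u v, E v w & E u w]]].

Definition collapseV : {set V} := ~: collapseZ.

Definition collapseE : rel V := fun x y =>
  E x y && ~~ [exists v in collapseZ, exists u, exists w,
     [&& E u v, E v w, E u w & ((x == u) && (y == v) || (x == v) && (y == w))]].

End Collapse.

(** Inserting a vertex [v] without changing the weight forces [f v = 0], and by the
    degree hypothesis [v] has a unique in-neighbour [u] and out-neighbour [w] in [G].
    An interior insertion [.. a v b ..] would make [a -> b] an edge of [G] with
    [a = u] and [b = w], so [v] would have been removed by the collapse; hence [v] is
    appended at an end of [alpha], where its neighbour is [u] (resp. [w]).  Since [v]
    survived the collapse, [u -> w] is not an edge. *)

From mathcomp Require Import all_boot all_order all_algebra.
Import Order.TTheory GRing.Theory Num.Theory.
Local Open Scope ring_scope.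

Lemma subseq_sizeS {T : eqType} {a b : seq T} :
  subseq a b -> size b = (size a).+1 ->
  exists p1 x p2, a = p1 ++ p2 /\ b = p1 ++ x :: p2.
Proof.
elim: b a => [|y b IHb] [|z a] //=.
- by move=> _ [/size0nil ->]; exists [::], y, [::].
- case: eqP => [-> sub_ab [size_ab] | _ sub_zab [size_zab]].
  + have [p1 [x [p2 [-> ->]]]] := IHb a sub_ab size_ab.
    by exists (y :: p1), x, p2.
  + have := size_subseq_leqif sub_zab; rewrite /= size_zab => -[_].
    rewrite eqxx => /esym/eqP <-.
    by exists [::], y, (z :: a).
Qed.

Lemma card_set1_rel {T : finType} {P : pred T} :
  #|[set y | P y]| = 1%N -> exists x, P x /\ forall y, P y -> y = x.
Proof.
move/eqP/cards1P=> [x Px]; exists x; split.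
- by move: (set11 x); rewrite -Px inE.
- by move=> y Py; apply/set1P; rewrite -Px inE.
Qed.

Section Allowed.
Set Implicit Arguments. Unset Strict Implicit.
Variables (V : finType) (S : {set V}).

Lemma allowed_sub (E1 E2 : rel V) p :
  subrel E1 E2 -> allowed S E1 p -> allowed S E2 p.
Proof. by case: p => //= x p sub_E /andP[-> /(sub_path sub_E)->]. Qed.

Lemma allowed_mem (E : rel V) p x : allowed S E p -> x \in p -> x \in S.
Proof. by case: p => // h t /andP[/allP in_S _] /in_S. Qed.

Lemma allowed_edge (E : rel V) s1 a c s2 :
  allowed S E (s1 ++ a :: c :: s2) -> E a c.
Proof.
case: s1 => [|h s1] /= /andP[_]; first by case/andP.
by rewrite cat_path /= => /and3P[_ _ /andP[]].
Qed.

Lemma allowed_insert_end (E : rel V) p1 p2 x u w :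
  (forall y, E y x -> y = u) -> (forall y, E x y -> y = w) -> ~~ E u w ->
  allowed S E (p1 ++ p2) -> allowed S E (p1 ++ x :: p2) ->
  (last u p1 = u /\ p2 = [::]) \/ (head w p2 = w /\ p1 = [::]).
Proof.
move=> in_x out_x not_Euw.
case: p1 / lastP => [|p a]; case: p2 => [|y q] //.
- by move=> _ /(@allowed_edge E [::]) /out_x ->; right.
- by rewrite cats0 cat_rcons => _ /allowed_edge /in_x ->; left; rewrite last_rcons.
rewrite !cat_rcons => /allowed_edge E_ay allowed_axy.
have /in_x a_u : E a x by move: allowed_axy => /allowed_edge.
have /out_x y_w : E x y by move: allowed_axy; rewrite -cat_rcons => /allowed_edge.
by move: not_Euw; rewrite -a_u -y_w E_ay.
Qed.

End Allowed.

Lemma fweight_insert {V : finType} {R : realFieldType} (f : V -> R) p1 x p2 :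
  fweight f (p1 ++ x :: p2) = f x + fweight f (p1 ++ p2).
Proof. by rewrite /fweight !big_cat big_cons addrCA. Qed.

Section Collapse.
Set Implicit Arguments. Unset Strict Implicit.
Variables (V : finType) (E : rel V) (R : realFieldType) (f : V -> R).

Lemma collapseE_sub : subrel (collapseE E f) E.
Proof. by move=> x y /andP[]. Qed.

Lemma collapseV_no_shortcut u x w :
  x \in collapseV E f -> f x = 0 -> E u x -> E x w -> ~~ E u w.
Proof.
move=> + fx0 E_ux E_xw; rewrite in_setC inE fx0 eqxx /=; apply: contra => E_uw.
by apply/existsP; exists u; apply/existsP; exists w; apply/and3P.
Qed.

End Collapse.

Theorem proposition6p1 (V : finType) (E : rel V) (R : realFieldType) (f : V -> R) :
  irreflexive E ->
  discrete_morse [set: V] E f ->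
  (forall v, f v = 0 ->
     #|[set w | E v w]| = 1%N /\ #|[set u | E u v]| = 1%N) ->
  forall alpha beta : seq V,
    inM (collapseV E f) (collapseE E f) f alpha beta ->
    exists v u w : V,
      [/\ f v = 0, E u v, E v w, ~~ E u w &
        ((last u alpha = u /\ beta = rcons alpha v) \/
         (head w alpha = w /\ beta = v :: alpha))].
Proof.
move=> _ _ deg0 alpha beta /and5P[A_alpha A_beta /eqP size_beta sub_ab /eqP weight_eq].
have [p1 [x [p2 [alpha_def beta_def]]]] := subseq_sizeS sub_ab size_beta.
subst alpha beta.
have fx0 : f x = 0.
  by apply: (addIr (fweight f (p1 ++ p2))); rewrite -fweight_insert -weight_eq add0r.
have [w [E_xw out_x]] := card_set1_rel (deg0 x fx0).1.
have [u [E_ux in_x]] := card_set1_rel (deg0 x fx0).2.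
have x_kept : x \in collapseV E f.
  by apply: (allowed_mem A_beta); rewrite mem_cat mem_head orbT.
have not_Euw := collapseV_no_shortcut x_kept fx0 E_ux E_xw.
exists x, u, w; split=> //.
have sub_E := collapseE_sub (E := E) (f := f).
have [[last_u ->]|[head_w ->]] := allowed_insert_end in_x out_x not_Euw
  (allowed_sub sub_E A_alpha) (allowed_sub sub_E A_beta).
- by left; rewrite cats0 cats1.
- by right.
Qed.
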